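(* In the network model described in the context, let $\pi$ be an admissible cyclic policy with maximum inter-scheduling times $(k_e^{\pi})_{e\in E}$ and slice widths $(w_{i,e})$. If \begin{itemize} \item $\sum_{e\in\mathcal{T}^{(i)}}k_e^{\pi}\le\tau_i$ for all $f_i\in\mathcal{F}$, \item $\sum_{f_i:e\in\mathcal{T}^{(i)}}w_{i,e}\le c_e$ for all $e\in E$, \item $w_{i,e}=\lambda_i k_e^{\pi}$ for all $f_i\in\mathcal{F}$, $e\in\mathcal{T}^{(i)}$, \item $\mu^\pi(t)\in\mathcal{M}$ for all $0\le t<K^\pi$, \end{itemize} then $\pi$ supports $\mathcal{F}$. Furthermore, if in addition $\pi$ is a regular schedule, then all slices equal their bottleneck values, i.e. $w_{i,e}=\lambda_i/\bar{\mu}^\pi_e$ for all $f_i\in\mathcal{F}$, $e\in\mathcal{T}^{(i)}$.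
   Context: Network model: directed graph $G=(V,E)$, slotted time, link capacities $c_e$, interference given by a conflict graph on links with feasible activation sets $\mathcal{M}$ (its independent sets). Flows $f_i\in\mathcal{F}$ have fixed routes $\mathcal{T}^{(i)}$, deterministic fluid arrival rates $\lambda_i>0$ per slot at the source (arrivals during slots $0\le t\le T$), and deadlines $\tau_i$. Link $e\in\mathcal{T}^{(i)}$ reserves a slice $w_{i,e}$ for $f_i$ with its own FCFS queue (initially empty). An admissible policy activates $\mu^\pi(t)\in\mathcal{M}$ each slot and is work-conserving (an activated link serves $\min\{Q_{i,e}(t),w_{i,e}\}$ from each slice queue; served units proceed to the next link). A cyclic policy satisfies $\mu^\pi(t)=\mu^\pi(t+K^\pi)$ for all $t\ge0$; $\bar{\mu}^\pi_e=\frac1{K^\pi}\sum_{t=0}^{K^\pi-1}\mu^\pi_e(t)$. The maximum inter-scheduling time $k_e^\pi$ of link $e$ is the largest number of slots between two consecutive activations of $e$ (cyclically). $\pi$ is a regular schedule if $k^\pi_e=1/\bar{\mu}^\pi_e$ for all $e\in E$ (all inter-scheduling times of each link are equal). A policy supports $\mathcal{F}$ iff every packet of every flow $f_i$ is delivered to its destination within $\tau_i$ slots of its arrival, for any finite horizon $T$. *)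

From mathcomp Require Import all_boot all_order all_algebra.
Set Implicit Arguments. Unset Strict Implicit. Unset Printing Implicit Defensive.
Import Order.TTheory GRing.Theory Num.Theory.
Local Open Scope ring_scope.

Definition is_route (V E : finType) (src dst : E -> V) (r : seq E) : bool :=
  [&& r != [::], uniq r & sorted (fun a b => dst a == src b) r].

Definition feasible_act (E : finType) (conf : rel E) (A : {set E}) : bool :=
  [forall x in A, forall y in A, ~~ conf x y].

Definition cyclic_sched (E : finType) (mu : nat -> {set E}) (K : nat) : Prop :=
  (0 < K)%N /\ forall t, mu (t + K)%N = mu t.

(* For an activation slot t of link e, the number of slots until the next
   activation of e (in 1..K; = K if e is activated once per cycle). *)
Definition next_gap (E : finType) (mu : nat -> {set E}) (K : nat) (e : E) (t : nat) : nat :=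
  head K [seq d <- iota 1 K | e \in mu (t + d)%N].

(* Maximum inter-scheduling time k_e of link e (cyclically); meaningful
   (finite) only when e is activated in the cycle, see [scheduled]. *)
Definition max_inter_sched (E : finType) (mu : nat -> {set E}) (K : nat) (e : E) : nat :=
  \max_(t < K | e \in mu t) next_gap mu K e t.

(* e is activated at least once per cycle (i.e. k_e < +oo). *)
Definition scheduled (E : finType) (mu : nat -> {set E}) (K : nat) (e : E) : bool :=
  [exists t : 'I_K, e \in mu t].

Definition avg_act (R : realFieldType) (E : finType) (mu : nat -> {set E}) (K : nat) (e : E) : R :=
  (#|[set t : 'I_K | e \in mu t]|)%:R / K%:R.

(* Regular schedule: k_e = 1 / \bar mu_e for every link
   (for a never-activated link both sides are "infinite"; here both are 0). *)
Definition regular_sched (R : realFieldType) (E : finType) (mu : nat -> {set E}) (K : nat) : Prop :=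
  forall e : E, (max_inter_sched mu K e)%:R = (avg_act R mu K e)^-1.

Definition arrival (R : realFieldType) (F : finType) (lam : F -> R) (T : nat) (i : F) (t : nat) : R :=
  if (t <= T)%N then lam i else 0.

Definition pred_link (E : finType) (r : seq E) (e : E) : option E :=
  if index e r is n.+1 then Some (nth e r n) else None.

(* State of the network at the start of slot t:
   (Q, S) with Q i e = content of the slice queue of flow i at link e at the
   start of slot t, and S i e = amount served from that queue in slot t-1
   (0 when t = 0). *)
Fixpoint net_state (R : realFieldType) (F E : finType) (route : F -> seq E)
    (lam : F -> R) (w : F -> E -> R) (mu : nat -> {set E}) (T t : nat)
    : (F -> E -> R) * (F -> E -> R) :=
  match t with
  | 0 => (fun _ _ => 0, fun _ _ => 0)
  | t'.+1 =>
      let (Q, Sp) := net_state route lam w mu T t' in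
      let inp := fun i e =>
        if e \in route i then
          match pred_link (route i) e with
          | None => arrival lam T i t'
          | Some e' => Sp i e'
          end
        else 0 in
      let B := fun i e => Q i e + inp i e in
      let S := fun i e =>
        if (e \in mu t') && (e \in route i) then Num.min (B i e) (w i e) else 0 in
      (fun i e => B i e - S i e, S)
  end.

Definition served (R : realFieldType) (F E : finType) (route : F -> seq E)
    (lam : F -> R) (w : F -> E -> R) (mu : nat -> {set E}) (T : nat)
    (i : F) (e : E) (t : nat) : R :=
  (net_state route lam w mu T t.+1).2 i e.

Definition delivered (R : realFieldType) (F E : finType) (route : F -> seq E)
    (lam : F -> R) (w : F -> E -> R) (mu : nat -> {set E}) (T : nat)
    (i : F) (t : nat) : R :=
  match ohead (rev (route i)) with
  | Some el => \sum_(u < t.+1) served route lam w mu T i el u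
  | None => 0
  end.

(* The policy supports the flows: for every finite horizon T, every flow i and
   every arrival slot t, all fluid of flow i that arrived in slots 0..t has
   been delivered by the end of slot t + tau_i - 1, i.e. (queues being FCFS)
   each packet arriving in slot t is delivered within tau_i slots
   (slots t, t+1, ..., t + tau_i - 1). *)
Definition supports (R : realFieldType) (F E : finType) (route : F -> seq E)
    (lam : F -> R) (tau : F -> nat) (w : F -> E -> R) (mu : nat -> {set E}) : Prop :=
  forall (T : nat) (i : F) (t : nat), (t <= T)%N ->
    \sum_(u < t.+1) arrival lam T i u <= delivered route lam w mu T i (t + tau i).-1.

From mathcomp Require Import all_boot all_order all_algebra.
From mathcomp Require Import ring zify.
Import Order.TTheory GRing.Theory Num.Theory.
Set Implicit Arguments. Unset Strict Implicit. Unset Printing Implicit Defensive.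
Local Open Scope ring_scope.

(* A slice queue of link e is served at least once in every window of k_e
   consecutive slots, and each service moves up to w_{i,e} = lam_i k_e, the
   most the flow can bring in during k_e slots.  Hence whatever has entered
   the queue by slot t has left it by slot t + k_e - 1: a delay bound of k_e
   per link, which adds up along the route to at most tau_i.  The second
   claim is the identity k_e = 1 / \bar mu_e of regular schedules. *)

Definition cumul (R : nmodType) (f : nat -> R) (t : nat) : R := \sum_(u < t) f u.

Section Cumulative.
Variables (R : numDomainType) (f : nat -> R).

Lemma cumul0 : cumul f 0 = 0.
Proof. exact: big_ord0. Qed.

Lemma cumulS t : cumul f t.+1 = cumul f t + f t.
Proof. exact: big_ord_recr. Qed.

Lemma cumulD_le (b : R) : (forall u, f u <= b) ->
  forall a m, cumul f (a + m) <= cumul f a + b *+ m.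
Proof.
move=> f_le a m; rewrite /cumul big_split_ord lerD2l.
by apply: le_trans (ler_sum _ (fun u _ => f_le _)) _; rewrite sumr_const card_ord.
Qed.

Hypothesis f_ge0 : forall u, 0 <= f u.

Lemma cumul_ge0 t : 0 <= cumul f t.
Proof. exact: sumr_ge0. Qed.

Lemma cumul_nondecreasing : {homo cumul f : a b / (a <= b)%N >-> a <= b}.
Proof.
by move=> a b /subnKC <-; rewrite /cumul big_split_ord lerDl sumr_ge0.
Qed.

End Cumulative.

Section WorkConservingQueue.
Variables (R : realFieldType) (inp out backlog : nat -> R) (act : nat -> bool) (w : R).
Hypotheses (backlog0 : backlog 0 = 0)
  (backlog_step : forall u, backlog u.+1 = backlog u + inp u - out u)
  (out_def : forall u, out u = if act u then Num.min (backlog u + inp u) w else 0)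
  (out_ge0 : forall u, 0 <= out u).

Lemma backlog_cumul t : backlog t = cumul inp t - cumul out t.
Proof.
elim: t => [|t IH]; first by rewrite backlog0 !cumul0 subrr.
by rewrite backlog_step IH !cumulS; ring.
Qed.

Lemma cumul_out_act s :
  act s -> cumul out s.+1 = Num.min (cumul inp s.+1) (cumul out s + w).
Proof.
move=> act_s; rewrite cumulS out_def act_s backlog_cumul addr_minr.
by congr Num.min; rewrite cumulS; ring.
Qed.

Variable k : nat.
Hypothesis act_window : forall s, exists2 d, (d < k)%N & act (s + d).

(* Within any k slots the queue either empties or serves a full w, so a lower
   envelope G of the input growing by at most w per k slots reappears at the
   output delayed by k - 1 slots. *)
Lemma cumul_out_lower_bound (G : nat -> R) :
  {homo G : a b / (a <= b)%N >-> a <= b} -> G 0 = 0 ->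
  (forall y, G (y + k)%N <= G y + w) -> (forall t, G t <= cumul inp t) ->
  forall t, G (t.+1 - k)%N <= cumul out t.
Proof.
move=> G_homo G0 G_rate G_in; elim/ltn_ind => t IH.
have [t_lt_k|k_le_t] := ltnP t k.
  by rewrite (_ : t.+1 - k = 0)%N ?G0 ?cumul_ge0 //; lia.
have [d d_lt_k act_s] := act_window (t - k).
set s := (t - k + d)%N in act_s.
apply: le_trans (cumul_nondecreasing out_ge0 (_ : s.+1 <= t)%N); last by lia.
rewrite cumul_out_act // le_min; apply/andP; split.
  by apply: le_trans (G_in _); apply: G_homo; lia.
apply: (le_trans (G_homo _ (s.+1 - k + k)%N _)); first by lia.
by apply: (le_trans (G_rate _)); rewrite lerD2r IH //; lia.
Qed.

End WorkConservingQueue.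

Section CyclicSchedule.
Variables (E : finType) (mu : nat -> {set E}) (K : nat).
Hypothesis cyc : cyclic_sched mu K.

Lemma cyclic_sched_gt0 : (0 < K)%N.
Proof. by case: cyc. Qed.

Lemma cyclic_schedD t m : mu (t + m * K)%N = mu t.
Proof.
elim: m => [|m IH]; first by rewrite mul0n addn0.
by rewrite mulSn (addnC K) addnA cyc.2 IH.
Qed.

Lemma cyclic_sched_mod t : mu t = mu (t %% K)%N.
Proof. by rewrite {1}(divn_eq t K) addnC cyclic_schedD. Qed.

Variable e : E.
Local Notation k := (max_inter_sched mu K e).

Lemma next_gap_spec t :
  e \in mu t -> (0 < next_gap mu K e t)%N && (e \in mu (t + next_gap mu K e t)%N).
Proof.
rewrite /next_gap; case def_s: [seq d <- _ | _] => [|g s] /= e_t.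
  by rewrite cyclic_sched_gt0 cyc.2.
have : g \in [seq d <- iota 1 K | e \in mu (t + d)%N] by rewrite def_s mem_head.
by rewrite mem_filter mem_iota => /andP[-> /andP[-> _]].
Qed.

Lemma next_activation a :
  e \in mu a -> exists2 g, (0 < g <= k)%N & e \in mu (a + g)%N.
Proof.
rewrite cyclic_sched_mod => e_a.
have /andP[g_gt0 e_ag] := next_gap_spec e_a.
exists (next_gap mu K e (a %% K)); last by rewrite cyclic_sched_mod -modnDml -cyclic_sched_mod.
rewrite g_gt0 /=.
pose a' := Ordinal (ltn_pmod a cyclic_sched_gt0).
exact: (@leq_bigmax_cond _ (fun t : 'I_K => e \in mu t) (fun t => next_gap mu K e t) a').
Qed.

Lemma activation_after a s :
  (a <= s)%N -> e \in mu a -> exists2 d, (d < k)%N & e \in mu (s + d)%N.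
Proof.
have [n] := ubnP (s - a); elim: n a => // n IH a lt_sa_n le_as e_a.
have [g /andP[g_gt0 g_le_k] e_ag] := next_activation e_a.
have [lt_as|ge_as] := ltnP a s; last first.
  have -> : s = a by apply/eqP; rewrite eqn_leq ge_as le_as.
  by exists 0%N; rewrite ?addn0 // (leq_trans g_gt0 g_le_k).
have [lt_ag_s|ge_ag_s] := ltnP (a + g) s.
  by apply: (IH (a + g)%N) (ltnW lt_ag_s) e_ag; lia.
exists (a + g - s)%N; last by rewrite subnKC.
by rewrite ltn_subLR // -addSn leq_add.
Qed.

Lemma activation_window :
  scheduled mu K e -> forall s, exists2 d, (d < k)%N & e \in mu (s + d)%N.
Proof.
case/existsP => p e_p s.
have le_p_sK : (p <= s + K)%N by rewrite ltnW // ltn_addl.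
have [d d_lt_k e_sKd] := activation_after le_p_sK e_p.
by exists d; rewrite // -cyc.2 addnAC.
Qed.

End CyclicSchedule.

Section Network.
Variables (R : realFieldType) (F E : finType) (route : F -> seq E) (lam : F -> R)
  (w : F -> E -> R) (mu : nat -> {set E}) (T : nat).
Local Notation state := (net_state route lam w mu T).

Definition link_input (i : F) (e : E) (t : nat) : R :=
  if e \in route i then
    match pred_link (route i) e with
    | None => arrival lam T i t
    | Some e' => (state t).2 i e'
    end
  else 0.

Lemma net_served_step t i e : (state t.+1).2 i e =
  if (e \in mu t) && (e \in route i) then
    Num.min ((state t).1 i e + link_input i e t) (w i e)
  else 0.
Proof. by rewrite /link_input /=; case: (state t). Qed.

Lemma net_backlog_step t i e :
  (state t.+1).1 i e = (state t).1 i e + link_input i e t - (state t.+1).2 i e.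
Proof. by rewrite net_served_step /link_input /=; case: (state t). Qed.

Hypotheses (lam_gt0 : forall i, 0 < lam i)
  (w_ge0 : forall i e, e \in route i -> 0 <= w i e).

Lemma arrival_ge0 i t : 0 <= arrival lam T i t.
Proof. by rewrite /arrival; case: ifP => // _; exact: ltW. Qed.

Lemma arrival_le i t : arrival lam T i t <= lam i.
Proof. by rewrite /arrival; case: ifP => // _; exact: ltW. Qed.

Lemma net_state_ge0 t :
  (forall i e, 0 <= (state t).1 i e) /\ (forall i e, 0 <= (state t).2 i e).
Proof.
elim: t => [|t [Q_ge0 S_ge0]]; first by split.
have in_ge0 i e : 0 <= link_input i e t.
  by rewrite /link_input; case: ifP => // _; case: pred_link => *; rewrite ?arrival_ge0.
split=> i e; rewrite ?net_backlog_step net_served_step;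
  case: ifP => [/andP[_ e_i]|_]; rewrite ?subr0 //.
- by rewrite subr_ge0 ge_min lexx.
- exact: addr_ge0.
- by rewrite le_min addr_ge0 // w_ge0.
Qed.

Section Flow.
Variables (K : nat) (i : F) (x0 : E).
Hypotheses (cyc : cyclic_sched mu K) (route_uniq : uniq (route i))
  (route_sched : forall e, e \in route i -> scheduled mu K e)
  (w_def : forall e, e \in route i -> w i e = lam i * (max_inter_sched mu K e)%:R).

Local Notation arrived := (cumul (arrival lam T i)).
Local Notation link j := (nth x0 (route i) j).

Lemma link_delay e P : e \in route i ->
  (forall t, arrived (t - P) <= cumul (link_input i e) t) ->
  forall t, arrived (t.+1 - (P + max_inter_sched mu K e)) <=
            cumul (served route lam w mu T i e) t.
Proof.
move=> e_i arrived_in t; rewrite subnDA subnAC.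
apply: (cumul_out_lower_bound (backlog := fun u => (state u).1 i e) _ _ _ _
          (activation_window cyc (route_sched e_i)) (G := fun u => arrived (u - P))).
- by [].
- by move=> u; rewrite net_backlog_step.
- by move=> u; rewrite /served net_served_step e_i andbT.
- by move=> u; case: (net_state_ge0 u.+1) => _; apply.
- by move=> a b le_ab; apply: cumul_nondecreasing; [exact: arrival_ge0 | exact: leq_sub2r].
- by rewrite sub0n cumul0.
- move=> y; rewrite w_def // mulr_natr.
  apply: le_trans (cumulD_le (arrival_le i) _ _).
  apply: cumul_nondecreasing; first exact: arrival_ge0.
  by rewrite leq_subLR addnA leq_add2r -leq_subLR.
- exact: arrived_in.
Qed.

Definition route_lag j := (\sum_(l < j) max_inter_sched mu K (link l))%N.

Lemma cumul_link_input_next j : (j.+1 < size (route i))%N ->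
  forall t, cumul (link_input i (link j.+1)) t.+1 =
            cumul (served route lam w mu T i (link j)) t.
Proof.
move=> lt_j1 t; rewrite /cumul big_ord_recl /link_input mem_nth //.
rewrite /pred_link index_uniq //= (set_nth_default x0) 1?ltnW // add0r.
by apply: eq_bigr.
Qed.

Lemma cumul_link_input j : (j < size (route i))%N ->
  forall t, arrived (t - route_lag j) <= cumul (link_input i (link j)) t.
Proof.
elim: j => [|j IH] lt_j t.
  rewrite /route_lag big_ord0 subn0; apply: ler_sum => u _.
  by rewrite /link_input mem_nth // /pred_link index_uniq.
case: t => [|t]; first by rewrite sub0n !cumul0.
rewrite cumul_link_input_next // /route_lag big_ord_recr /=.
exact: (link_delay (mem_nth x0 (ltnW lt_j)) (IH (ltnW lt_j))).
Qed.

Lemma delivered_lower_bound t : route i != [::] ->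
  arrived (t.+2 - \sum_(e <- route i) max_inter_sched mu K e) <=
  delivered route lam w mu T i t.
Proof.
move=> route_nonempty; have size_gt0 : (0 < size (route i))%N by rewrite lt0n size_eq0.
have lt_last : ((size (route i)).-1 < size (route i))%N by rewrite prednK.
rewrite /delivered.
have -> : ohead (rev (route i)) = Some (link (size (route i)).-1).
  by rewrite nth_last; case/lastP: (route i) route_nonempty => // r x _; rewrite rev_rcons last_rcons.
rewrite (big_nth x0) -{1}(prednK size_gt0) big_nat_recr //= big_mkord.
exact: (link_delay (mem_nth x0 lt_last) (cumul_link_input lt_last)).
Qed.

End Flow.
End Network.

Theorem corollary5
  (R : realFieldType) (V E F : finType) (src dst : E -> V)
  (c : E -> R) (conf : rel E)
  (route : F -> seq E) (lam : F -> R) (tau : F -> nat)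
  (w : F -> E -> R) (mu : nat -> {set E}) (K : nat) :
  (forall i, is_route src dst (route i)) ->
  (forall i, 0 < lam i) ->
  (* pi is admissible (feasible activations; work conservation is built in) *)
  (forall t, feasible_act conf (mu t)) ->
  cyclic_sched mu K ->
  (* links used by flows have finite maximum inter-scheduling time *)
  (forall i e, e \in route i -> scheduled mu K e) ->
  (forall i, (\sum_(e <- route i) max_inter_sched mu K e <= tau i)%N) ->
  (forall e, \sum_(i | e \in route i) w i e <= c e) ->
  (forall i e, e \in route i -> w i e = lam i * (max_inter_sched mu K e)%:R) ->
  (forall t, (t < K)%N -> feasible_act conf (mu t)) ->
  supports route lam tau w mu /\
  (regular_sched R mu K ->
     forall i e, e \in route i -> w i e = lam i / avg_act R mu K e).
Proof.
move=> route_ok lam_gt0 _ cyc route_sched tau_ge _ w_def _; split; last first.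
  by move=> regular i e e_i; rewrite w_def // regular.
move=> T i t _.
have w_ge0 j e : e \in route j -> 0 <= w j e.
  by move=> e_j; rewrite w_def // mulr_ge0 ?ler0n // ltW.
have /and3P[route_nonempty route_uniq _] := route_ok i.
have x0 : E by case: (route i) route_nonempty => // x.
apply: le_trans (delivered_lower_bound T lam_gt0 w_ge0 x0 cyc route_uniq
                   (route_sched i) (w_def i) _ route_nonempty).
apply: cumul_nondecreasing; first exact: arrival_ge0.
by have := leqSpred (t + tau i); have := tau_ge i; lia.
Qed.
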